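(* Let $U,V$ be finite-dimensional vector spaces over a field $\mathbb{K}$, let $\mathcal{S}$ be a linear subspace of $\mathcal{L}(U,V)$ with $\operatorname{codim}_{\mathcal{L}(U,V)}\mathcal{S}\leq 2\dim V-3$, and let $F:\mathcal{S}\to V$ be a range-compatible group homomorphism. Assume there are three linearly independent vectors $y_1,y_2,y_3\in V$ such that $F\bmod y_i$ is local for each $i\in\{1,2,3\}$. Then $F$ is local.
   Context: A map $F:\mathcal{S}\to V$ is range-compatible when $F(s)\in\operatorname{im}s$ for all $s\in\mathcal{S}$, and local when there is $x\in U$ with $F(s)=s(x)$ for all $s$. For nonzero $y\in V$, let $\pi:V\to V/\mathbb{K}y$ be the canonical projection; $\mathcal{S}\bmod y:=\{\pi\circ s: s\in\mathcal{S}\}\subset\mathcal{L}(U,V/\mathbb{K}y)$, and $F\bmod y:\mathcal{S}\bmod y\to V/\mathbb{K}y$ is the unique map with $(F\bmod y)(\pi\circ s)=\pi(F(s))$ for all $s\in\mathcal{S}$ (well defined and range-compatible since $F$ is). Thus $F\bmod y$ is local iff there is $x\in U$ with $F(s)-s(x)\in\mathbb{K}y$ for all $s\in\mathcal{S}$. *)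

From HB Require Import structures.
From mathcomp Require Import all_boot all_order all_algebra.
Set Implicit Arguments. Unset Strict Implicit. Unset Printing Implicit Defensive.
Import GRing.Theory.
Local Open Scope ring_scope.

(* F : S -> V is modelled as a total map 'Hom(U,V) -> V whose values are
   only constrained on S. *)

Definition additive_on (K : fieldType) (U V : vectType K)
  (S : {vspace 'Hom(U, V)}) (F : 'Hom(U, V) -> V) : Prop :=
  forall s t, s \in S -> t \in S -> F (s + t) = F s + F t.

Definition range_compatible (K : fieldType) (U V : vectType K)
  (S : {vspace 'Hom(U, V)}) (F : 'Hom(U, V) -> V) : Prop :=
  forall s, s \in S -> F s \in limg s.

Definition local_map (K : fieldType) (U V : vectType K)
  (S : {vspace 'Hom(U, V)}) (F : 'Hom(U, V) -> V) : Prop :=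
  exists x : U, forall s, s \in S -> F s = s x.

Definition local_mod (K : fieldType) (U V : vectType K)
  (S : {vspace 'Hom(U, V)}) (F : 'Hom(U, V) -> V) (y : V) : Prop :=
  exists x : U, forall s, s \in S -> F s - s x \in <[y]>%VS.

From HB Require Import structures.
From mathcomp Require Import all_boot all_order all_algebra.
From mathcomp Require Import zify.
Set Implicit Arguments. Unset Strict Implicit.
Unset Printing Implicit Defensive.
Import GRing.Theory.
Local Open Scope ring_scope.

(* Let F mod y_i be local, witnessed by x_i (i = 1, 2, 3), so that for every
   s in S we have F s = s x1 + a y1 = s x2 + b y2 = s x3 + c y3.  Put
   z := x2 - x1 and w := x3 - x1; then s z = a y1 - b y2, s w = a y1 - c y3.
   - If z and w are linearly dependent, comparing coefficients on the free
     family (y1, y2, y3) forces b = 0 for all s (or c = 0 when w = 0), so F is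
     local with witness x2 (resp. x3).
   - Otherwise the evaluation map s |-> (s z, s w) sends L(U, V) onto V x V
     and S into the 3-dimensional space W spanned by (y1, y1), (y2, 0) and
     (0, y3).  The codimension bound then forces S to be the full preimage
     of W (a general dimension count).  Hence the map s0 with s0 z = y1 - y2,
     s0 w = y1 - y3 and range spanned by these two vectors lies in S; for it
     a = 1, so y1 = F s0 - s0 x1 lies in the range of s0: impossible. *)

Section FreeTriple.
Variables (K : fieldType) (V : vectType K) (y1 y2 y3 : V).
Hypothesis free_y : free [:: y1; y2; y3].

Lemma free3_coef (a b c a' b' c' : K) :
  a *: y1 + b *: y2 + c *: y3 = a' *: y1 + b' *: y2 + c' *: y3 ->
  [/\ a = a', b = b' & c = c'].
Proof.
move=> e; have /freeP hf := free_y.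
have := hf (fun i : 'I_3 => nth 0 [:: a - a'; b - b'; c - c'] i).
rewrite !big_ord_recr big_ord0 /= add0r !scalerBl.
have diff_eq0 :
    (a *: y1 - a' *: y1) + (b *: y2 - b' *: y2) + (c *: y3 - c' *: y3) = 0.
  by rewrite (addrACA (a *: y1)) -opprD addrACA -opprD e subrr.
move=> /(_ diff_eq0) h0.
by split; apply: subr0_eq; [exact: (h0 ord0) | exact: (h0 (lift ord0 ord0)) |
  exact: (h0 ord_max)].
Qed.

Lemma free3_notin_span_diff : y1 \notin <<[:: y1 - y2; y1 - y3]>>%VS.
Proof.
apply/negP; rewrite span_cons span_seq1.
case/memv_addP=> _ /vlineP[p ->] [_ /vlineP[q ->] e].
have : 1 *: y1 + 0 *: y2 + 0 *: y3 = (p + q) *: y1 + (- p) *: y2 + (- q) *: y3.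
  rewrite scale1r !scale0r !addr0 {1}e !scalerBr scalerDl !scaleNr.
  by rewrite addrACA addrA.
case/free3_coef=> pq1 /eqP; rewrite eq_sym oppr_eq0 => /eqP p0 /eqP.
rewrite eq_sym oppr_eq0 => /eqP q0.
by move/eqP: pq1; rewrite p0 q0 addr0 oner_eq0.
Qed.

End FreeTriple.

Lemma full_preimage (K : fieldType) (A B : vectType K) (f : 'Hom(A, B))
    (S : {vspace A}) (W : {vspace B}) :
  (f @: S <= W)%VS -> (\dim {:A} + \dim W <= \dim S + \dim (limg f))%N ->
  forall s, f s \in W -> s \in S.
Proof.
move=> fSW hdim s fsW.
have dimS := limg_ker_dim f S.
have dimA := limg_ker_dim f fullv; rewrite capfv in dimA.
have le_img := dimvS fSW.
have le_cap := dimvS (capvSr S (lker f)).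
have kerS : (lker f <= S)%VS.
  have /eqP <- : (S :&: lker f == lker f)%VS.
    by rewrite eqEdim capvSr /=; lia.
  exact: capvSl.
have imgS : (f @: S)%VS = W by apply/eqP; rewrite eqEdim fSW /=; lia.
rewrite -imgS in fsW; case/memv_imgP: fsW => t tS ft.
have : s - t \in lker f by rewrite memv_ker linearB /= ft subrr.
by move/(subvP kerS) => stS; rewrite -(subrK t s) rpredD.
Qed.

Section Interpolation.
Variables (K : fieldType) (U V : vectType K).

Definition interp (X : 2.-tuple U) (v1 v2 : V) (u : U) : V :=
  coord X ord0 u *: v1 + coord X ord_max u *: v2.

Fact interp_linear X v1 v2 : linear (interp X v1 v2).
Proof.
move=> k u v; rewrite /interp !linearP /=.
by rewrite !scalerDl !scalerA (mulrC _ k) addrACA.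
Qed.

HB.instance Definition _ X v1 v2 :=
  GRing.isSemilinear.Build K U V _ (interp X v1 v2)
    (GRing.semilinear_linear (interp_linear X v1 v2)).

Lemma interpolation (z w : U) (v1 v2 : V) : free [:: z; w] ->
  exists f : 'Hom(U, V),
    [/\ f z = v1, f w = v2 & (limg f <= <<[:: v1; v2]>>)%VS].
Proof.
move=> free_zw; pose X := [tuple z; w].
have coord_z (j : 'I_2) : coord X j z = (ord0 == j)%:R :=
  coord_free ord0 j free_zw.
have coord_w (j : 'I_2) : coord X j w = (ord_max == j)%:R :=
  coord_free ord_max j free_zw.
exists (linfun (interp X v1 v2)); split.
- by rewrite lfunE /= /interp !coord_z /= scale1r scale0r addr0.
- by rewrite lfunE /= /interp !coord_w /= scale1r scale0r add0r.
- apply/subvP=> _ /memv_imgP[u _ ->]; rewrite lfunE.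
  by apply: rpredD; apply: rpredZ; apply: memv_span; rewrite !inE eqxx ?orbT.
Qed.

Definition eval2 (z w : U) (s : 'Hom(U, V)) : (V * V)%type := (s z, s w).

Fact eval2_linear z w : linear (eval2 z w).
Proof. by move=> k s t; rewrite /eval2 !add_lfunE !scale_lfunE. Qed.

HB.instance Definition _ z w :=
  GRing.isSemilinear.Build K 'Hom(U, V) (V * V)%type _ (eval2 z w)
    (GRing.semilinear_linear (eval2_linear z w)).

Lemma eval2_rank (z w : U) : free [:: z; w] ->
  \dim (limg (linfun (eval2 z w))) = (\dim {:V} + \dim {:V})%N.
Proof.
move=> free_zw.
suff -> : limg (linfun (eval2 z w)) = fullv by rewrite !dimvf.
apply/eqP; rewrite eqEsubv subvf; apply/subvP=> -[v1 v2] _.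
have [f [fz fw _]] := interpolation v1 v2 free_zw.
by apply/memv_imgP; exists f; rewrite ?memvf // lfunE /= /eval2 fz fw.
Qed.

End Interpolation.

Section LocalModThree.
Variables (K : fieldType) (U V : vectType K).
Variables (S : {vspace 'Hom(U, V)}) (F : 'Hom(U, V) -> V).
Variables (y1 y2 y3 : V) (x1 x2 x3 : U).
Hypothesis free_y : free [:: y1; y2; y3].
Hypothesis local1 : forall s, s \in S -> F s - s x1 \in <[y1]>%VS.
Hypothesis local2 : forall s, s \in S -> F s - s x2 \in <[y2]>%VS.
Hypothesis local3 : forall s, s \in S -> F s - s x3 \in <[y3]>%VS.

Lemma local_mod_decomp s : s \in S -> exists a b c : K,
  [/\ F s - s x1 = a *: y1, F s - s x2 = b *: y2, F s - s x3 = c *: y3,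
      s (x2 - x1) = a *: y1 - b *: y2 & s (x3 - x1) = a *: y1 - c *: y3].
Proof.
move=> sS.
case/vlineP: (local1 sS) => a ea; case/vlineP: (local2 sS) => b eb.
case/vlineP: (local3 sS) => c ec.
have diff_val (x x' : U) : s (x' - x) = (F s - s x) - (F s - s x').
  by rewrite linearB /= opprB [RHS]addrC addrA subrK.
by exists a, b, c; rewrite !diff_val -ea -eb -ec.
Qed.

Lemma local_of_dependent :
  ~~ free [:: x2 - x1; x3 - x1] -> local_map S F.
Proof.
rewrite free_cons seq1_free negb_and !negbK span_seq1.
case/orP=> [/vlineP[k ezk] | /eqP w0].
- exists x2 => s sS; have [a [b [c [_ eb _ ez ew]]]] := local_mod_decomp sS.
  have : a *: y1 + (- b) *: y2 + 0 *: y3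
      = (k * a) *: y1 + 0 *: y2 + (- (k * c)) *: y3.
    by rewrite scale0r addr0 scaleNr -ez ezk linearZ /= ew scalerBr !scalerA
      scale0r addr0 scaleNr.
  case/(free3_coef free_y)=> _ /eqP; rewrite oppr_eq0 => /eqP b0 _.
  by apply/eqP; rewrite -subr_eq0 eb b0 scale0r.
- exists x3 => s sS; have [a [b [c [_ _ ec _ ew]]]] := local_mod_decomp sS.
  have : 0 *: y1 + 0 *: y2 + 0 *: y3 = a *: y1 + 0 *: y2 + (- c) *: y3.
    by rewrite !scale0r !addr0 scaleNr -ew w0 linear0.
  case/(free3_coef free_y)=> _ _ /eqP; rewrite eq_sym oppr_eq0 => /eqP c0.
  by apply/eqP; rewrite -subr_eq0 ec c0 scale0r.
Qed.

Definition pair_space : {vspace (V * V)%type} :=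
  <<[:: (y1, y1); (y2, 0%R); (0%R, y3)]>>%VS.

Lemma eval2_in_pair_space s : s \in S ->
  eval2 (x2 - x1) (x3 - x1) s \in pair_space.
Proof.
move=> sS; have [a [b [c [_ _ _ ez ew]]]] := local_mod_decomp sS.
have -> : eval2 (x2 - x1) (x3 - x1) s
    = a *: (y1, y1) + (- b) *: (y2, 0) + (- c) *: (0, y3).
  by rewrite /eval2 ez ew; congr pair; rewrite /= ?scaler0 ?addr0 ?add0r
    scaleNr.
by rewrite !rpredD ?rpredZ // memv_span // !inE eqxx ?orbT.
Qed.

Lemma independent_impossible :
  ((\dim {:'Hom(U, V)} - \dim S) + 3 <= 2 * \dim {:V})%N ->
  range_compatible S F -> ~~ free [:: x2 - x1; x3 - x1].
Proof.
move=> hcodim hrc; apply/negP=> free_zw.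
pose ev := linfun (@eval2 _ _ V (x2 - x1) (x3 - x1)).
have evS : (ev @: S <= pair_space)%VS.
  by apply/subvP=> _ /memv_imgP[s sS ->]; rewrite lfunE eval2_in_pair_space.
(* The codimension bound: S is as large as the preimage of a 3-space. *)
have dim_room :
    (\dim {:'Hom(U, V)} + \dim pair_space <= \dim S + \dim (limg ev))%N.
  have dimW : (\dim pair_space <= 3)%N := dim_span _.
  have dimS := dimvS (subvf S).
  rewrite (eval2_rank V free_zw); move: hcodim dimS dimW; rewrite !dimvf.
  by move: (dim 'Hom(U, V)) (dim V) (\dim S) (\dim pair_space); lia.
have [s0 [s0z s0w s0_rng]] := interpolation (y1 - y2) (y1 - y3) free_zw.
have s0S : s0 \in S.
  apply: (full_preimage evS dim_room); rewrite lfunE /= /eval2 s0z s0w.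
  have -> : (y1 - y2, y1 - y3) = (y1, y1) - (y2, 0) - (0, y3).
    by congr pair; rewrite /= ?subr0 ?sub0r.
  by rewrite !rpredB // memv_span // !inE eqxx ?orbT.
have [a [b [c [ea _ _ ez _]]]] := local_mod_decomp s0S.
have s0z_coefs :
    1 *: y1 + (- 1) *: y2 + 0 *: y3 = a *: y1 + (- b) *: y2 + 0 *: y3.
  by rewrite !scale0r !addr0 !scaleNr !scale1r -ez s0z.
have [a1 _ _] := free3_coef free_y s0z_coefs.
have y1_in_rng : y1 \in limg s0.
  by rewrite -[y1]scale1r a1 -ea rpredB ?hrc // memv_img ?memvf.
move/negP: (free3_notin_span_diff free_y); apply.
exact: subvP s0_rng _ y1_in_rng.
Qed.

End LocalModThree.

Theorem lemma4p2 (K : fieldType) (U V : vectType K)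
  (S : {vspace 'Hom(U, V)}) (F : 'Hom(U, V) -> V)
  (hcodim : ((\dim {:'Hom(U, V)} - \dim S) + 3 <= 2 * \dim {:V})%N)
  (hadd : additive_on S F) (hrc : range_compatible S F)
  (y1 y2 y3 : V) (hfree : free [:: y1; y2; y3])
  (h1 : local_mod S F y1) (h2 : local_mod S F y2) (h3 : local_mod S F y3) :
  local_map S F.
Proof.
case: h1 => x1 h1; case: h2 => x2 h2; case: h3 => x3 h3.
apply: (local_of_dependent hfree h1 h2 h3).
exact: (independent_impossible hfree h1 h2 h3 hcodim hrc).
Qed.
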